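(* Every weight of a semi-invariant of $S(\mathfrak q)$ lies in $\bigoplus_{k=1}^{s-1}\mathbb Z\,\varpi_{\iota_k}$; i.e. $\Lambda(\mathfrak q)\subset\bigoplus_{\iota\in\{\iota_0,\dots,\iota_s\}}\mathbb Z\varpi_\iota$.
   Context: Setup (parabolic contractions of $\mathfrak{gl}_n$). Let $\mathbb C$ be an algebraically closed field of characteristic $0$ and $n\ge 2$. Let $e_{p,q}$ be the elementary matrices of $\mathfrak{gl}_n$, $I=\{1,\dots,n\}$. Fix $0=\iota_0<\iota_1<\dots<\iota_s=n$, $s\ge2$; $I_k=\{\iota_{k-1}+1,\dots,\iota_k\}$, $k(x)$ the index with $x\in I_{k(x)}$. $\mathfrak p=\operatorname{span}\{e_{p,q}: k(p)\le k(q)\}$, $\mathfrak n^-=\operatorname{span}\{e_{p,q}: k(p)>k(q)\}$; $\mathfrak q=\mathfrak p\ltimes\mathfrak n^-$ is $\mathfrak{gl}_n$ with bracket $[p_1,p_2]=p_1p_2-p_2p_1$, $[p,x]=\pi_{\mathfrak n^-}(px-xp)$, $[x,y]=0$ ($p,p_i\in\mathfrak p$, $x,y\in\mathfrak n^-$, $\pi_{\mathfrak n^-}$ projection onto $\mathfrak n^-$ along $\mathfrak p$). The adjoint action extends to $S(\mathfrak q)$ by derivations; a semi-invariant is a nonzero $f$ with $x\cdot f=\lambda(x)f$ for all $x$, $\lambda\in\mathfrak q^*$ its weight; $\Lambda(\mathfrak q)$ is the set of weights of semi-invariants. For $1\le\ell\le n-1$, $\varpi_\ell\in\mathfrak q^*$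 vanishes on the off-diagonal $e_{p,q}$ and $\varpi_\ell(\sum_u a_ue_{u,u})=\sum_{u\le\ell}a_u-\frac{\ell}{n}\sum_ua_u$; $\varpi_0=\varpi_n=0$. *)

From HB Require Import structures.
From mathcomp Require Import all_boot all_order all_algebra.
From mathcomp Require Import mpoly.
Set Implicit Arguments. Unset Strict Implicit. Unset Printing Implicit Defensive.
Import Order.TTheory GRing.Theory Num.Theory.
Local Open Scope ring_scope.

Section Parabolic.
Variables (F : fieldType) (n s : nat) (iota : nat -> nat).

(* k(x) for the 0-based index x : 'I_n (which is x+1 in the paper):
   the number of j in {0,..,s-1} with iota j <= x, i.e. the k with
   iota_(k-1) < x+1 <= iota_k when iota is strictly increasing. *)
Definition blk (x : 'I_n) : nat := (\sum_(j < s) (iota j <= x))%N.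

Definition proj_p (A : 'M[F]_n) : 'M[F]_n :=
  \matrix_(i, j) (if (blk i <= blk j)%N then A i j else 0).
Definition proj_n (A : 'M[F]_n) : 'M[F]_n :=
  \matrix_(i, j) (if (blk j < blk i)%N then A i j else 0).

(* the contracted bracket of q = p |x n^- on the space gl_n *)
Definition qbr (A B : 'M[F]_n) : 'M[F]_n :=
  let Ap := proj_p A in let An := proj_n A in
  let Bp := proj_p B in let Bn := proj_n B in
  (Ap *m Bp - Bp *m Ap)
  + proj_n (Ap *m Bn - Bn *m Ap)
  - proj_n (Bp *m An - An *m Bp).

(* S(q) = polynomial algebra on the coordinates; the variable indexed by
   mxvec_index p q stands for the basis vector e_{p,q} *)
Definition Sq := {mpoly F[n * n]}.

Definition var (p q : 'I_n) : Sq := 'X_(mxvec_index p q).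

Definition lin (A : 'M[F]_n) : Sq :=
  \sum_(p < n) \sum_(q < n) A p q *: var p q.

(* adjoint action of x in q on S(q), extended by derivations *)
Definition qact (x : 'M[F]_n) (f : Sq) : Sq :=
  \sum_(p < n) \sum_(q < n)
     lin (qbr x (delta_mx p q)) * mderiv (mxvec_index p q) f.

Definition semi_invariant (f : Sq) (lam : 'M[F]_n -> F) : Prop :=
  f != 0 /\ forall x : 'M[F]_n, qact x f = lam x *: f.

Definition is_weight (lam : 'M[F]_n -> F) : Prop :=
  (forall (a : F) (x y : 'M[F]_n), lam (a *: x + y) = a * lam x + lam y) /\
  exists f : Sq, semi_invariant f lam.

Definition varpi (l : nat) (x : 'M[F]_n) : F :=
  \sum_(u < n | (u < l)%N) x u u - (l%:R / n%:R) * \tr x.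

End Parabolic.

From HB Require Import structures.
From mathcomp Require Import all_boot all_order all_algebra.
From mathcomp Require Import mpoly.
From mathcomp Require Import ring zify.
Set Implicit Arguments. Unset Strict Implicit. Unset Printing Implicit Defensive.
Import Order.TTheory GRing.Theory Num.Theory.
Local Open Scope ring_scope.

(* Let f be a semi-invariant of weight lam.
   - For x in p, ad x is a derivation of the contracted bracket (qbr_jacobi);
     hence the action of x on S(q), which is the derivation of S(q) extending
     ad x (deriv_ext), satisfies [x., y.] = [x, y]. on S(q).  Since x. and y.
     act on f by scalars, lam vanishes on [p, q] (weight_qbr).
   - Consequently lam kills the off-diagonal units e_pq = [e_pp, e_pq], takes
     equal values on e_aa and e_bb within a diagonal block (e_aa - e_bb is a
     bracket of p), and kills the central identity matrix, so that
     lam(x) = sum_u d_u x_uu with d constant on blocks and sum_u d_u = 0.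
   - Comparing the coefficients of a monomial X^m of f in e_uu . f = d_u f shows
     that d_u is the integer weight of X^m (weight_diag_integral).
   - Finally, any such d equals sum_k (d_(iota_k - 1) - d_(iota_k)) varpi_(iota_k)
     (block_combination), which gives the integral coefficients. *)

Section Contraction.
Variables (F : fieldType) (n s : nat) (iota : nat -> nat).
Local Notation M := ('M[F]_n).
Local Notation P := (@proj_p F n s iota).
Local Notation N := (@proj_n F n s iota).
Local Notation br := (@qbr F n s iota).

Lemma proj_p_is_linear : linear P.
Proof. by move=> a A B; apply/matrixP=> i j; rewrite !mxE; case: ifP; rewrite ?mulr0 ?addr0. Qed.
Lemma proj_n_is_linear : linear N.
Proof. by move=> a A B; apply/matrixP=> i j; rewrite !mxE; case: ifP; rewrite ?mulr0 ?addr0. Qed.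
HB.instance Definition _ := GRing.isLinear.Build F M M _ P proj_p_is_linear.
HB.instance Definition _ := GRing.isLinear.Build F M M _ N proj_n_is_linear.

Lemma proj_pN (A : M) : P A + N A = A.
Proof. by apply/matrixP=> i j; rewrite !mxE; case: leqP; rewrite ?addr0 ?add0r. Qed.
Lemma proj_pP (A : M) : P (P A) = P A.
Proof. by apply/matrixP=> i j; rewrite !mxE; case: ifP => // ->. Qed.
Lemma proj_nN (A : M) : N (N A) = N A.
Proof. by apply/matrixP=> i j; rewrite !mxE; case: ifP => // ->. Qed.
Lemma proj_nP (A : M) : N (P A) = 0.
Proof. by apply/matrixP=> i j; rewrite !mxE; case: leqP. Qed.
Lemma proj_pN0 (A : M) : P (N A) = 0.
Proof. by apply/matrixP=> i j; rewrite !mxE; case: leqP. Qed.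

Lemma proj_n_parabolic (x : M) : P x = x -> N x = 0.
Proof. by move=> hx; rewrite -hx proj_nP. Qed.

Lemma proj_p_mul (X Y : M) : P X = X -> P Y = Y -> P (X *m Y) = X *m Y.
Proof.
move=> hX hY; apply/matrixP=> i j; rewrite mxE; case: ifP => // hij.
rewrite mxE big1 // => k _; rewrite -hX -hY !mxE.
case: (leqP (blk s iota i) (blk s iota k)) => [hik|]; last by rewrite mul0r.
case: ifP => [hkj|_]; last by rewrite mulr0.
by rewrite (leq_trans hik hkj) in hij.
Qed.

(* the commutator of gl_n, linear in its second argument; it is locked so
   that rewriting with generic linearity lemmas does not unfold it *)
Fact comm_key : unit. Proof. by []. Qed.
Definition comm : M -> M -> M :=
  locked_with comm_key (fun U V : M => U *m V - V *m U).

Lemma commE (U V : M) : comm U V = U *m V - V *m U.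
Proof. by rewrite [comm]unlock. Qed.

Lemma comm_is_linear (U : M) : linear (comm U).
Proof.
move=> a A B; rewrite !commE mulmxDr mulmxDl -scalemxAr -scalemxAl.
by rewrite opprD addrACA scalerBr.
Qed.
HB.instance Definition _ (U : M) := GRing.isLinear.Build F M M _ (comm U) (comm_is_linear U).

Lemma commC (U V : M) : comm U V = - comm V U.
Proof. by rewrite !commE opprB. Qed.

Lemma comm_jacobi (x y z : M) : comm x (comm y z) - comm y (comm x z) = comm (comm x y) z.
Proof.
rewrite !commE !mulmxBl !mulmxBr !mulmxA.
move: (x *m y *m z) (x *m z *m y) (y *m z *m x) (z *m y *m x) (y *m x *m z) (z *m x *m y).
by move=> a b c d e f; apply/matrixP=> i j; rewrite !mxE; ring.
Qed.

Lemma proj_p_comm (X Y : M) : P X = X -> P Y = Y -> P (comm X Y) = comm X Y.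
Proof. by move=> hX hY; rewrite commE linearB /= !proj_p_mul. Qed.

Lemma proj_n_comm (X Y : M) : P X = X -> P Y = Y -> N (comm X Y) = 0.
Proof. by move=> hX hY; rewrite -(proj_p_comm hX hY) proj_nP. Qed.

Lemma proj_n_comm_n (X A : M) : P X = X -> N (comm X (N A)) = N (comm X A).
Proof.
move=> hX; rewrite -{2}(proj_pN A) linearD [in RHS]linearD /=.
by rewrite (proj_n_comm hX (proj_pP A)) add0r.
Qed.

Lemma qbrE (y B : M) :
  br y B = comm (P y) (P B) + N (comm (P y) (N B)) - N (comm (P B) (N y)).
Proof. by rewrite !commE. Qed.

Lemma qbr_parabolic (x B : M) : P x = x -> br x B = comm x (P B) + N (comm x (N B)).
Proof. by move=> hx; rewrite qbrE hx (proj_n_parabolic hx) linear0 linear0 subr0. Qed.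

Lemma proj_p_qbr (y B : M) : P (br y B) = comm (P y) (P B).
Proof. by rewrite qbrE linearB linearD /= !proj_pN0 subr0 addr0 proj_p_comm // proj_pP. Qed.

Lemma proj_n_qbr (y B : M) : N (br y B) = N (comm (P y) (N B)) - N (comm (P B) (N y)).
Proof. by rewrite qbrE linearB linearD /= !proj_nN proj_n_comm ?proj_pP // add0r. Qed.

Lemma qbr_is_linear (y : M) : linear (br y).
Proof.
move=> a A B; rewrite !qbrE !linearP /= [comm (P A) _]commC [comm (P B) _]commC.
rewrite [comm (_ + _) _]commC !linearP /= -!commC.
move: (comm (P y) (P A)) (comm (P y) (P B)) (N (comm (P y) (N A))) (N (comm (P y) (N B)))
  (N (comm (P A) (N y))) (N (comm (P B) (N y))) => a1 a2 a3 a4 a5 a6.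
by apply/matrixP=> i j; rewrite !mxE; ring.
Qed.
HB.instance Definition _ (y : M) := GRing.isLinear.Build F M M _ (br y) (qbr_is_linear y).

Lemma proj_p_qbr_parabolic (x B : M) : P x = x -> P (br x B) = comm x (P B).
Proof. by move=> hx; rewrite proj_p_qbr hx. Qed.

Lemma proj_n_qbr_parabolic (x B : M) : P x = x -> N (br x B) = N (comm x (N B)).
Proof. by move=> hx; rewrite proj_n_qbr hx (proj_n_parabolic hx) linear0 linear0 subr0. Qed.

Lemma qbr_jacobi (x y B : M) : P x = x ->
  br x (br y B) - br y (br x B) = br (br x y) B.
Proof.
move=> hx.
rewrite (qbr_parabolic _ hx) proj_p_qbr proj_n_qbr (linearB (comm x)) (linearB N) /=.
rewrite !proj_n_comm_n // [br y (br x B)]qbrE [br (br x y) B]qbrE.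
rewrite !proj_p_qbr_parabolic // !proj_n_qbr_parabolic //.
rewrite (proj_n_comm_n _ (proj_pP y)) (proj_n_comm_n _ (proj_pP B)).
have jacB : comm (P B) (comm x (N y)) = comm x (comm (P B) (N y)) - comm (comm x (P B)) (N y).
  by rewrite -comm_jacobi opprB addrC subrK.
rewrite -!(comm_jacobi x (P y)) jacB !linearB /=.
move: (comm x (comm (P y) (P B))) (comm (P y) (comm x (P B))) (N (comm x (comm (P y) (N B))))
  (N (comm (P y) (comm x (N B)))) (N (comm x (comm (P B) (N y)))) (N (comm (comm x (P B)) (N y))).
by move=> a b c d e f; apply/matrixP=> i j; rewrite !mxE; ring.
Qed.

Lemma delta_parabolic (a b : 'I_n) :
  (blk s iota a <= blk s iota b)%N -> P (delta_mx a b) = delta_mx a b.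
Proof.
move=> hab; apply/matrixP => i j; rewrite !mxE; case: ifP => // hij.
by case: (i =P a) => [ei|] //=; case: (j =P b) => [ej|] //=; rewrite ei ej hab in hij.
Qed.

Lemma qbr_diag (u : 'I_n) (B : M) :
  br (delta_mx u u) B = \matrix_(i, j) (((i == u)%:R - (j == u)%:R) * B i j).
Proof.
have commE_diag (C : M) :
    comm (delta_mx u u) C = \matrix_(i, j) (((i == u)%:R - (j == u)%:R) * C i j).
  rewrite commE; apply/matrixP => i j; rewrite !mxE mulrBl.
  rewrite (bigD1 u) //= big1 => [|k /negPf hk]; last by rewrite mxE hk andbF mul0r.
  rewrite (bigD1 u) //= [X in _ - (_ + X)]big1 => [|k /negPf hk]; last by rewrite mxE hk mulr0.
  rewrite !mxE !eqxx andbT !addr0 mulrC.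
  by case: (i =P u) => [->|]; case: (j =P u) => [->|] //=; rewrite ?mulr0 ?mul0r ?mulr1 ?mul1r.
rewrite qbr_parabolic ?delta_parabolic // !commE_diag; apply/matrixP => i j; rewrite !mxE.
by case: leqP => _; rewrite ?mulr0 ?addr0 ?add0r.
Qed.

Lemma qbr_offdiag (p q : 'I_n) : p != q -> br (delta_mx p p) (delta_mx p q) = delta_mx p q.
Proof.
move=> hpq; rewrite qbr_diag; apply/matrixP => i j; rewrite !mxE.
case: (i =P p) => [_|_] /=; last by rewrite mulr0.
case: (j =P q) => [->|_] /=; last by rewrite mulr0.
by rewrite eq_sym (negPf hpq) subr0 mulr1.
Qed.

Lemma qbr_block (a b : 'I_n) : blk s iota a = blk s iota b ->
  br (delta_mx a b) (delta_mx b a) = delta_mx a a - delta_mx b b.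
Proof.
move=> e.
have ha : P (delta_mx a b) = delta_mx a b by apply: delta_parabolic; rewrite e.
have hb : P (delta_mx b a) = delta_mx b a by apply: delta_parabolic; rewrite e.
by rewrite qbr_parabolic // hb (proj_n_parabolic hb) linear0 linear0 addr0 commE !mul_delta_mx.
Qed.

Lemma qbr_scalar1 (B : M) : br 1%:M B = 0.
Proof.
have p1 : P 1%:M = 1%:M.
  by apply/matrixP => i j; rewrite !mxE; case: eqP => [->|_]; [rewrite leqnn | case: ifP].
by rewrite qbr_parabolic // !commE !mul1mx !mulmx1 !subrr linear0 addr0.
Qed.
End Contraction.

Lemma mcoeff_euler (R : comNzRingType) (k : nat) (i : 'I_k) (g : {mpoly R[k]}) (m : 'X_{1..k}) :
  ('X_i * mderiv i g)@_m = g@_m *+ m i.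
Proof.
case: (posnP (m i)) => hm.
  rewrite hm mulr0n; apply/eqP; rewrite -[_ == 0]negbK -mcoeff_msupp.
  rewrite mulrC (perm_mem (msuppMX _ _)); apply/negP => /mapP [m' _ e].
  by move: hm; rewrite e mnmDE mnm1E eqxx.
have e : m = (U_(i) + (m - U_(i)))%MM by rewrite addmC submK // lep1mP -lt0n.
rewrite {1}e mulrC mcoeffMX mcoeff_deriv submK ?lep1mP -?lt0n //.
by rewrite mnmBE mnm1E eqxx subn1 prednK.
Qed.

Section Derivations.
Variables (F : fieldType) (n : nat).
Local Notation M := ('M[F]_n).
Local Notation S := (Sq F n).
Local Notation idx := (@mxvec_index n n).

Lemma lin_is_linear : linear (@lin F n).
Proof.
move=> a A B; rewrite /lin scaler_sumr -big_split; apply: eq_bigr => p _.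
by rewrite scaler_sumr -big_split; apply: eq_bigr => q _; rewrite !mxE scalerDl scalerA.
Qed.
HB.instance Definition _ := GRing.isLinear.Build F M S _ (@lin F n) lin_is_linear.

Lemma idx_eq (p q c d : 'I_n) : (idx p q == idx c d) = (p == c) && (q == d).
Proof.
rewrite /mxvec_index (inj_eq (@cast_ord_inj _ _ _)) (inj_eq (@enum_rank_inj _)).
by rewrite xpair_eqE.
Qed.

Lemma mderiv_var (c d p q : 'I_n) :
  mderiv (idx c d) (var F p q) = ((p == c) && (q == d))%:R.
Proof.
rewrite /var mderivX mnm1E idx_eq.
case: (p =P c) => [->|] /=; last by rewrite scale0r.
case: (q =P d) => [->|] /=; last by rewrite scale0r.
have -> : (U_(idx c d) - U_(idx c d))%MM = 0%MM.
  by apply/mnmP => k; rewrite mnmBE subnn mnm0E.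
by rewrite mpolyX0 scale1r.
Qed.

Lemma mderiv_lin (c d : 'I_n) (A : M) : mderiv (idx c d) (lin A) = (A c d)%:MP.
Proof.
rewrite /lin linear_sum (bigD1 c) //= [X in _ + X]big1 => [|p /negPf hp]; last first.
  rewrite linear_sum big1 // => q _.
  by rewrite linearZ /= mderiv_var hp scaler0.
rewrite addr0 linear_sum (bigD1 d) //= [X in _ + X]big1 => [|q /negPf hq]; last first.
  by rewrite linearZ /= mderiv_var hq andbF scaler0.
by rewrite addr0 linearZ /= mderiv_var !eqxx -alg_mpolyC.
Qed.

Lemma lin_delta (a b : 'I_n) : lin (delta_mx a b) = var F a b.
Proof.
rewrite /lin (bigD1 a) //= [X in _ + X]big1 => [|p /negPf hp]; last first.
  by rewrite big1 // => q _; rewrite mxE hp scale0r.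
rewrite addr0 (bigD1 b) //= [X in _ + X]big1 => [|q /negPf hq]; last first.
  by rewrite mxE hq andbF scale0r.
by rewrite addr0 mxE !eqxx scale1r.
Qed.

Definition deriv_ext (phi : M -> M) (f : S) : S :=
  \sum_(p < n) \sum_(q < n) lin (phi (delta_mx p q)) * mderiv (idx p q) f.

Lemma deriv_ext_is_linear (phi : M -> M) : linear (deriv_ext phi).
Proof.
move=> a f g; rewrite /deriv_ext scaler_sumr -big_split; apply: eq_bigr => p _.
rewrite scaler_sumr -big_split; apply: eq_bigr => q _.
by rewrite linearP /= mulrDr scalerAr.
Qed.
HB.instance Definition _ (phi : M -> M) :=
  GRing.isLinear.Build F S S _ (deriv_ext phi) (deriv_ext_is_linear phi).

Lemma deriv_extM (phi : M -> M) (g h : S) :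
  deriv_ext phi (g * h) = deriv_ext phi g * h + g * deriv_ext phi h.
Proof.
rewrite /deriv_ext mulr_suml mulr_sumr -big_split; apply: eq_bigr => p _.
rewrite mulr_suml mulr_sumr -big_split; apply: eq_bigr => q _.
by rewrite /= mderivM; ring.
Qed.

Section LinearEndomorphism.
Variable phi : {linear M -> M}.

Lemma deriv_ext_lin (A : M) : deriv_ext phi (lin A) = lin (phi A).
Proof.
rewrite /deriv_ext [in RHS](matrix_sum_delta A) !linear_sum; apply: eq_bigr => p _.
rewrite !linear_sum; apply: eq_bigr => q _.
by rewrite mderiv_lin mulrC mul_mpolyC !linearZ.
Qed.

(* the second-order part of the composite of two such derivations *)
Definition second_order (psi : M -> M) (f : S) : S :=
  \sum_(p < n) \sum_(q < n) lin (psi (delta_mx p q)) * deriv_ext phi (mderiv (idx p q) f).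

Lemma deriv_ext_comp (psi : M -> M) (f : S) :
  deriv_ext phi (deriv_ext psi f) = deriv_ext (phi \o psi) f + second_order psi f.
Proof.
rewrite [deriv_ext psi f]/deriv_ext [deriv_ext (_ \o _) f]/deriv_ext /second_order.
rewrite linear_sum -big_split; apply: eq_bigr => p _.
rewrite linear_sum -big_split; apply: eq_bigr => q _.
by rewrite /= deriv_extM deriv_ext_lin.
Qed.
End LinearEndomorphism.

(* the second-order term is symmetric, because partial derivatives commute *)
Lemma second_orderC (phi psi : {linear M -> M}) (f : S) :
  second_order phi psi f = second_order psi phi f.
Proof.
have pairE (chi xi : {linear M -> M}) :
  second_order chi xi f = \sum_(i : 'I_n * 'I_n) \sum_(j : 'I_n * 'I_n)
    lin (xi (delta_mx i.1 i.2)) * lin (chi (delta_mx j.1 j.2)) *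
    mderiv (idx j.1 j.2) (mderiv (idx i.1 i.2) f).
  rewrite /second_order /deriv_ext [LHS]pair_big /=; apply: eq_bigr => i _.
  rewrite mulr_sumr; under [LHS]eq_bigr do rewrite mulr_sumr.
  by rewrite [LHS]pair_big; apply: eq_bigr => j _; rewrite /= mulrA.
rewrite !pairE exchange_big; apply: eq_bigr => i _; apply: eq_bigr => j _.
by rewrite mderiv_comm [lin (psi _) * _]mulrC.
Qed.

Lemma deriv_ext_commutator (phi psi chi : {linear M -> M}) (f : S) :
  (forall B, phi (psi B) - psi (phi B) = chi B) ->
  deriv_ext phi (deriv_ext psi f) - deriv_ext psi (deriv_ext phi f) = deriv_ext chi f.
Proof.
move=> hchi; rewrite !deriv_ext_comp second_orderC opprD addrACA subrr addr0.
rewrite /deriv_ext -sumrB; apply: eq_bigr => p _.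
by rewrite -sumrB; apply: eq_bigr => q _; rewrite -mulrBl -linearB /= hchi.
Qed.
End Derivations.

Section Weights.
Variables (F : fieldType) (n s : nat) (iota : nat -> nat).
Local Notation M := ('M[F]_n).
Local Notation P := (@proj_p F n s iota).
Local Notation br := (@qbr F n s iota).
Local Notation D := (@qact F n s iota).
Local Notation idx := (@mxvec_index n n).

HB.instance Definition _ (x : M) :=
  GRing.isLinear.Build F (Sq F n) (Sq F n) _ (D x) (deriv_ext_is_linear (br x)).

Lemma qact_commutator (x y : M) (f : Sq F n) : P x = x ->
  D x (D y f) - D y (D x f) = D (br x y) f.
Proof.
move=> hx; apply: (@deriv_ext_commutator _ _ (br x) (br y) (br (br x y))) => B.
exact: qbr_jacobi.
Qed.

Lemma qact_diag (u : 'I_n) (f : Sq F n) : D (delta_mx u u) f =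
  \sum_(a < n) \sum_(b < n) ((a == u)%:R - (b == u)%:R) *: (var F a b * mderiv (idx a b) f).
Proof.
apply: eq_bigr => a _; apply: eq_bigr => b _.
have -> : br (delta_mx u u) (delta_mx a b) = ((a == u)%:R - (b == u)%:R) *: delta_mx a b.
  rewrite qbr_diag; apply/matrixP => i j; rewrite !mxE.
  by case: (i =P a) => [->|]; case: (j =P b) => [->|] //=; rewrite ?mulr0 ?andbF.
by rewrite linearZ /= lin_delta scalerAl.
Qed.

Lemma qact_scalar1 (f : Sq F n) : D 1%:M f = 0.
Proof. by apply: big1 => p _; apply: big1 => q _; rewrite qbr_scalar1 linear0 mul0r. Qed.

Definition monomial_weight (m : 'X_{1..n * n}) (v : nat) : int :=
  \sum_(a < n) \sum_(b < n) (((a : nat) == v)%:Z - ((b : nat) == v)%:Z) * (m (idx a b))%:Z.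

Variables (lam : M -> F) (f : Sq F n).
Hypothesis lam_linear : forall (a : F) (x y : M), lam (a *: x + y) = a * lam x + lam y.
Hypothesis f_semi : semi_invariant s iota f lam.

Let lamD (x y : M) : lam (x + y) = lam x + lam y.
Proof. by have := lam_linear 1 x y; rewrite scale1r mul1r. Qed.
Let lam0 : lam 0 = 0.
Proof. by apply: (addrI (lam 0)); rewrite -lamD !addr0. Qed.
Let lamZ (a : F) (x : M) : lam (a *: x) = a * lam x.
Proof. by have := lam_linear a x 0; rewrite !addr0 lam0 addr0. Qed.
Let lamB (x y : M) : lam (x - y) = lam x - lam y.
Proof. by rewrite -scaleN1r lamD lamZ mulN1r. Qed.
Let lam_sum (I : Type) (r : seq I) (G : I -> M) : lam (\sum_(i <- r) G i) = \sum_(i <- r) lam (G i).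
Proof. exact: (big_morph _ lamD lam0). Qed.

Let f_neq0 : f != 0. Proof. by case: f_semi. Qed.
Let qact_f (x : M) : D x f = lam x *: f. Proof. by case: f_semi. Qed.

Let lam_eq0 (x : M) : D x f = 0 -> lam x = 0.
Proof. by rewrite qact_f => /eqP; rewrite scaler_eq0 (negPf f_neq0) orbF => /eqP. Qed.

(* a weight vanishes on [p, q]: the commutator of two scalar operators is 0 *)
Lemma weight_qbr (x y : M) : P x = x -> lam (br x y) = 0.
Proof.
move=> hx; apply: lam_eq0; rewrite -(qact_commutator y f hx) !qact_f !linearZ /= !qact_f.
by rewrite scalerN !scalerA mulrC subrr.
Qed.

Lemma weight_offdiag (p q : 'I_n) : p != q -> lam (delta_mx p q) = 0.
Proof. by move=> hpq; rewrite -(qbr_offdiag F s iota hpq) weight_qbr ?delta_parabolic. Qed.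

Lemma weight_block (a b : 'I_n) :
  blk s iota a = blk s iota b -> lam (delta_mx a a) = lam (delta_mx b b).
Proof.
move=> e; apply/eqP; rewrite -subr_eq0 -lamB.
by rewrite -(qbr_block F e) weight_qbr ?delta_parabolic ?e.
Qed.

Lemma weight_trace : \sum_(u < n) lam (delta_mx u u) = 0.
Proof. by rewrite -lam_sum -mx1_sum_delta; apply: lam_eq0; apply: qact_scalar1. Qed.

Lemma weight_diag_expansion (x : M) : lam x = \sum_(u < n) lam (delta_mx u u) * x u u.
Proof.
rewrite {1}(matrix_sum_delta x) lam_sum; apply: eq_bigr => i _.
rewrite lam_sum (bigD1 i) //= big1 ?addr0 => [|j hj]; first by rewrite lamZ mulrC.
by rewrite lamZ weight_offdiag ?mulr0 // eq_sym.
Qed.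

(* comparing coefficients of a monomial X^m of f: the weight is integral *)
Lemma weight_diag_integral (m : 'X_{1..n * n}) (u : 'I_n) :
  f@_m != 0 -> lam (delta_mx u u) = (monomial_weight m u)%:~R.
Proof.
move=> fm; apply: (mulIf fm); have := congr1 (mcoeff m) (qact_f (delta_mx u u)).
rewrite mcoeffZ => <-; rewrite qact_diag raddf_sum /= /monomial_weight rmorph_sum mulr_suml.
apply: eq_bigr => a _; rewrite raddf_sum /= rmorph_sum mulr_suml; apply: eq_bigr => b _.
by rewrite mcoeffZ mcoeff_euler rmorphM rmorphB /= -[f@_m *+ _]mulr_natr [f@_m * _]mulrC mulrA.
Qed.
End Weights.

Section BlockCombination.
Variables (F : fieldType) (n s : nat) (iota : nat -> nat).
Hypotheses (iota_s : iota s = n)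
  (iota_step : forall k : nat, (k < s)%N -> (iota k < iota k.+1)%N).

Lemma iota_mono (k l : nat) : (k < l)%N -> (l <= s)%N -> (iota k < iota l)%N.
Proof.
elim: l => // l IH; rewrite ltnS leq_eqVlt => /orP [/eqP -> hl|hkl hl].
  exact: iota_step.
exact: ltn_trans (IH hkl (ltnW hl)) (iota_step hl).
Qed.

Lemma iota_inj (k l : nat) : (k <= s)%N -> (l <= s)%N -> iota k = iota l -> k = l.
Proof.
move=> hk hl e; case: (ltngtP k l) => // hkl.
  by have := iota_mono hkl hl; rewrite e ltnn.
by have := iota_mono hkl hk; rewrite e ltnn.
Qed.

Lemma iota_lt_n (k : nat) : (k < s)%N -> (iota k < n)%N.
Proof. by move=> hk; rewrite -iota_s; apply: iota_mono. Qed.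

Lemma blk_succ (v w : 'I_n) : val w = (val v).+1 ->
  (forall k : nat, (k < s)%N -> iota k != w) -> blk s iota v = blk s iota w.
Proof.
move=> ew hw; apply: eq_bigr => j _.
by rewrite ew [in RHS]leq_eqVlt ltnS -ew (negPf (hw j (ltn_ord j))).
Qed.

(* A function d, constant on the blocks and with zero sum over 0..n-1, is
   an explicit combination of the varpi_{iota k} with coefficients
   d (iota k - 1) - d (iota k), the jumps of d at the block boundaries. *)
Variable d : nat -> F.
Hypothesis d_block : forall v : nat, (v.+1 < n)%N ->
  (forall k : nat, (0 < k < s)%N -> iota k != v.+1) -> d v = d v.+1.
Hypothesis d_sum : \sum_(u < n) d u = 0.
Hypothesis n_neq0 : n%:R != 0 :> F.

Definition jump (k : nat) : F := d (iota k).-1 - d (iota k).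

Let tail_jumps (u : nat) : F := \sum_(1 <= k < s) (if (u < iota k)%N then jump k else 0).

Let tail_jumps_step (u : nat) : (u.+1 < n)%N ->
  tail_jumps u - tail_jumps u.+1 = d u - d u.+1.
Proof.
move=> hu; have -> : tail_jumps u - tail_jumps u.+1 =
    \sum_(1 <= k < s | iota k == u.+1) jump k.
  rewrite -sumrB [RHS]big_mkcond; apply: eq_bigr => k _.
  rewrite [(u < _)%N]leq_eqVlt eq_sym; case: (iota k =P u.+1) => [->|_] /=.
    by rewrite ltnn subr0.
  by case: ifP; rewrite ?subrr.
case: (boolP (has (fun k => iota k == u.+1) (index_iota 1 s))) => [|/hasPn none].
  case/hasP=> k0; rewrite mem_index_iota => /andP [k0_ge1 k0_lts] /eqP e0.
  rewrite (@congr_big_nat _ _ _ 1 s 1 s _ (fun k => k == k0) _ jump) // => [|k /andP [_ hk]].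
    by rewrite big_nat1_eq k0_ge1 k0_lts /jump e0.
  apply/eqP/eqP => [e|->//]; apply: iota_inj; rewrite ?(ltnW hk) ?(ltnW k0_lts) //.
  by rewrite e e0.
rewrite (d_block hu) => [|k hk]; last by apply: none; rewrite mem_index_iota.
rewrite subrr big1_seq // => k /andP [/eqP e hk].
by have := none k hk; rewrite e eqxx.
Qed.

Let tail_jumps_last : tail_jumps n.-1 = 0.
Proof.
apply: big1_seq => k /andP [_]; rewrite mem_index_iota => /andP [_ hk].
by have := iota_lt_n hk; case: ifP => //; lia.
Qed.

Let telescope (g : nat -> F) (u : nat) : (u <= n.-1)%N ->
  \sum_(u <= v < n.-1) (g v - g v.+1) = g u - g n.-1.
Proof.
move=> hu; rewrite -[RHS]opprB -(telescope_sumr _ hu) -sumrN.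
by apply: eq_bigr => v _; rewrite opprB.
Qed.

Let tail_jumpsE (u : nat) : (u < n)%N -> tail_jumps u = d u - d n.-1.
Proof.
move=> hu; have hu' : (u <= n.-1)%N by lia.
rewrite -[LHS]subr0 -tail_jumps_last -(telescope tail_jumps hu') -(telescope d hu').
by apply: eq_big_nat => v hv; apply: tail_jumps_step; lia.
Qed.

Let sum_jumps_prefix (h : 'I_n -> F) :
  \sum_(1 <= k < s) jump k * \sum_(u < n | (u < iota k)%N) h u =
  \sum_(u < n) h u * tail_jumps u.
Proof.
under eq_bigr => k _ do rewrite big_mkcond mulr_sumr.
rewrite exchange_big; apply: eq_bigr => u _; rewrite /tail_jumps mulr_sumr.
by apply: eq_bigr => k _; case: ifP => _; rewrite ?mulr0 // mulrC.
Qed.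

Lemma block_combination (x : 'M[F]_n) :
  \sum_(u < n) d u * x u u = \sum_(1 <= k < s) jump k * varpi (iota k) x.
Proof.
have sum_jumps_iota : \sum_(1 <= k < s) jump k * (iota k)%:R = - (n%:R * d n.-1).
  rewrite (@eq_big_nat _ _ _ 1 s _ (fun k => jump k * \sum_(u < n | (u < iota k)%N) 1)).
    rewrite sum_jumps_prefix (eq_bigr (fun u : 'I_n => d u - d n.-1)) => [|u _].
      by rewrite sumrB d_sum sumr_const card_ord add0r mulr_natl.
    by rewrite mul1r tail_jumpsE.
  move=> k /andP [_ hk]; rewrite -(big_ord_widen _ (fun _ => 1)) ?sumr_const ?card_ord //.
  exact/ltnW/iota_lt_n.
have prefix_part :
    \sum_(u < n) x u u * tail_jumps u = \sum_(u < n) d u * x u u - d n.-1 * \tr x.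
  rewrite /(\tr x) mulr_sumr -sumrB; apply: eq_bigr => u _.
  by rewrite tail_jumpsE //; ring.
have trace_part :
    \sum_(1 <= k < s) jump k * ((iota k)%:R / n%:R * \tr x) = - (d n.-1 * \tr x).
  rewrite (eq_bigr (fun k => jump k * (iota k)%:R * (n%:R^-1 * \tr x))) => [|k _].
    by rewrite -mulr_suml sum_jumps_iota; field.
  by rewrite !mulrA.
rewrite /varpi; under [RHS]eq_bigr do rewrite mulrBr.
by rewrite sumrB sum_jumps_prefix prefix_part trace_part opprK subrK.
Qed.
End BlockCombination.

Theorem mainTheorem6 (F : closedFieldType) (n s : nat) (iota : nat -> nat) :
  [pchar F] =i pred0 ->
  (2 <= n)%N -> (2 <= s)%N ->
  iota 0%N = 0%N -> iota s = n ->
  (forall k : nat, (k < s)%N -> (iota k < iota k.+1)%N) ->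
  forall lam : 'M[F]_n -> F,
    is_weight s iota lam ->
    exists c : nat -> int,
      forall x : 'M[F]_n,
        lam x = \sum_(1 <= k < s) (c k)%:~R * varpi (iota k) x.
Proof.
move=> char0 n_ge2 _ iota0 iota_s iota_step lam [lam_linear [f f_semi]].
pose m := mlead f.
have fm : f@_m != 0 by rewrite mleadc_eq0; case: f_semi.
pose d (v : nat) : F := (monomial_weight m v)%:~R.
have lam_diag (u : 'I_n) : lam (delta_mx u u) = d u.
  by have := weight_diag_integral f_semi u fm.
have d_block (v : nat) : (v.+1 < n)%N ->
    (forall k : nat, (0 < k < s)%N -> iota k != v.+1) -> d v = d v.+1.
  move=> hv none; have hv0 : (v < n)%N by apply: ltnW.
  rewrite -(lam_diag (Ordinal hv0)) -(lam_diag (Ordinal hv)).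
  apply: (weight_block lam_linear f_semi); apply: blk_succ => // -[|k] hk.
    by rewrite iota0.
  exact: none.
have d_sum : \sum_(u < n) d u = 0.
  by rewrite -[RHS](weight_trace lam_linear f_semi); apply: eq_bigr => u _; rewrite lam_diag.
have n_neq0 : n%:R != 0 :> F.
  by rewrite ((pcharf0P F).1 char0 n) -lt0n; apply: ltnW.
exists (fun k => monomial_weight m (iota k).-1 - monomial_weight m (iota k)) => x.
rewrite (weight_diag_expansion lam_linear f_semi x).
under eq_bigr do rewrite lam_diag.
rewrite (block_combination iota_s iota_step d_block d_sum n_neq0).
by apply: eq_bigr => k _; rewrite intrB.
Qed.
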